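(* Let $\mathcal{B}=(Q,\Sigma,\delta,q_0,F)$ be a Büchi automaton, let $\mathcal{S}=(X,\xrightarrow{\Sigma},\le)$ be a very-WSTS, and let $x_0\in X$. There exists $w\in L(\mathcal{B})\cap\mathrm{Traces}^\omega(\mathcal{S},x_0)$ if and only if there exists $q_f\in F$ such that $(q_f,\bot)$ is repeatedly coverable from $(q_0,x_0)$ in $\mathcal{B}\times\mathcal{S}_\bot$.
   Context: A (labeled, ordered) transition system is $\mathcal{S}=(X,\xrightarrow{\Sigma},\le)$: $X$ a set, $\Sigma$ a finite alphabet, $\xrightarrow{a}\subseteq X\times X$, $\le$ a quasi-ordering; relations extend to words. $\mathrm{Traces}^\omega(\mathcal{S},x)=\{a_1a_2\cdots\in\Sigma^\omega: x\xrightarrow{a_1}x_1\xrightarrow{a_2}x_2\cdots \text{ for some } x_1,x_2,\ldots\}$. A state $y$ is repeatedly coverable from $x$ if there are $z_0,z_1,\dots$ with $x\xrightarrow{*}z_0\xrightarrow{+}z_1\xrightarrow{+}\cdots$ and $z_i\ge y$ for all $i$. Very-WSTS: $\le$ is a wqo; $\mathcal{S}$ has strong monotonicity ($x\xrightarrow{a}y$, $x'\ge x$ imply $x'\xrightarrow{a}y'$ for some $y'\ge y$); its completion $\widehat{\mathcal{S}}=(\mathrm{Idl}(X),\Rightarrow_\Sigma,\subseteq)$ — where $\mathrm{Idl}(X)$ is the set of nonempty downward-closed directed subsets and $I\xRightarrow{a}J$ iff $J$ is a $\subseteq$-maximal ideal included in $\downarrow\{y:\exists x\in I,\ x\xrightarrow{a}y\}$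 — is deterministic, has $\subseteq$ as a wqo, is monotone, and has strong-strict monotonicity (strong monotonicity plus: $I\xRightarrow{a}J$, $I'\supset I$ imply $I'\xRightarrow{a}J'$ for some $J'\supset J$); and $\mathrm{Idl}(X)$ has finitely many levels, where $\mathrm{Idl}_0(X)=\mathrm{Idl}(X)$, $\mathrm{Idl}_n(X)$ is the set of unions of strictly increasing sequences in $\mathrm{Idl}_{n-1}(X)$, and finitely many levels means some $\mathrm{Idl}_n(X)=\emptyset$. A Büchi automaton $\mathcal{B}=(Q,\Sigma,\delta,q_0,F)$ accepts the infinite words having a run from $q_0$ visiting $F$ infinitely often; $L(\mathcal{B})$ is its language. $\mathcal{S}_\bot=(X\cup\{\bot\},\xrightarrow{\Sigma},\le_\bot)$ adds a new state $\bot$ with no transitions, below every state: $\le_\bot=\le\cup\{(\bot,y):y\in X\cup\{\bot\}\}$. The product $\mathcal{B}\times\mathcal{T}$ of $\mathcal{B}$ with a transition system $\mathcal{T}=(Y,\xrightarrow{\Sigma},\le)$ has states $Q\times Y$, alphabet $\Sigma\times Q$, ordering $(p,x)\le(q,y)$ iff $p=q$ and $x\le y$, and transitions $(p,x)\xrightarrow{(a,r)}(q,y)$ iff $(p,a,r)\in\delta$, $q=r$ and $x\xrightarrow{a}y$. *)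

From Stdlib Require Import Relations.
From mathcomp Require Import all_boot.

Set Implicit Arguments.
Unset Strict Implicit.
Unset Printing Implicit Defensive.

Record TS (Sigma X : Type) := mkTS {
  trans : Sigma -> X -> X -> Prop;
  tle   : X -> X -> Prop
}.
Arguments mkTS {Sigma X}.

Section TSDefs.
Variables (Sigma X : Type) (S : TS Sigma X).

Definition step (x y : X) : Prop := exists a : Sigma, trans S a x y.
Definition reach_star : X -> X -> Prop := clos_refl_trans X step.
Definition reach_plus : X -> X -> Prop := clos_trans X step.

(** Traces^omega(S, x): letters a_1 a_2 ... are [w 0], [w 1], ...;
    states x = xs 0, x_1 = xs 1, ... *)
Definition traces_omega (x : X) (w : nat -> Sigma) : Prop :=
  exists xs : nat -> X, xs 0 = x /\ forall n, trans S (w n) (xs n) (xs n.+1).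

Definition rep_coverable (x y : X) : Prop :=
  exists z : nat -> X,
    reach_star x (z 0) /\ (forall i, reach_plus (z i) (z i.+1)) /\
    (forall i, tle S y (z i)).

Definition quasi_order (le : X -> X -> Prop) : Prop :=
  (forall x, le x x) /\ (forall x y z, le x y -> le y z -> le x z).
Definition wqo (le : X -> X -> Prop) : Prop :=
  quasi_order le /\
  forall f : nat -> X, exists i j, i < j /\ le (f i) (f j).

Definition strong_monotone : Prop :=
  forall a x y x', trans S a x y -> tle S x x' ->
    exists y', trans S a x' y' /\ tle S y y'.

Definition monotone : Prop :=
  forall a x y x', trans S a x y -> tle S x x' ->
    exists y', reach_star x' y' /\ tle S y y'.

Definition subset (A B : X -> Prop) : Prop := forall x, A x -> B x.
Definition set_eq (A B : X -> Prop) : Prop := forall x, A x <-> B x.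
Definition strict_subset (A B : X -> Prop) : Prop := subset A B /\ ~ subset B A.

Definition downclosed (A : X -> Prop) : Prop :=
  forall x y, A y -> tle S x y -> A x.
Definition directed (A : X -> Prop) : Prop :=
  forall x y, A x -> A y -> exists z, A z /\ tle S x z /\ tle S y z.
Definition is_ideal (A : X -> Prop) : Prop :=
  (exists x, A x) /\ downclosed A /\ directed A.

Definition down_post (a : Sigma) (I : X -> Prop) : X -> Prop :=
  fun z => exists x y, I x /\ trans S a x y /\ tle S z y.

Definition cstep (a : Sigma) (I J : X -> Prop) : Prop :=
  is_ideal J /\ subset J (down_post a I) /\
  forall J', is_ideal J' -> subset J J' -> subset J' (down_post a I) ->
    subset J' J.

Definition creach_step (I J : X -> Prop) : Prop := exists a, cstep a I J.
Definition creach_star : (X -> Prop) -> (X -> Prop) -> Prop :=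
  clos_refl_trans (X -> Prop) creach_step.

Definition compl_deterministic : Prop :=
  forall a I J J', is_ideal I -> cstep a I J -> cstep a I J' -> set_eq J J'.
Definition compl_wqo : Prop :=
  forall f : nat -> (X -> Prop), (forall n, is_ideal (f n)) ->
    exists i j, i < j /\ subset (f i) (f j).
Definition compl_monotone : Prop :=
  forall a I J I', is_ideal I -> is_ideal I' -> cstep a I J -> subset I I' ->
    exists J', creach_star I' J' /\ subset J J'.
Definition compl_strong_monotone : Prop :=
  forall a I J I', is_ideal I -> is_ideal I' -> cstep a I J -> subset I I' ->
    exists J', cstep a I' J' /\ subset J J'.
Definition compl_strong_strict_monotone : Prop :=
  compl_strong_monotone /\
  forall a I J I', is_ideal I -> is_ideal I' -> cstep a I J ->
    strict_subset I I' -> exists J', cstep a I' J' /\ strict_subset J J'.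

Fixpoint level (n : nat) (A : X -> Prop) : Prop :=
  match n with
  | 0 => is_ideal A
  | m.+1 => exists s : nat -> (X -> Prop),
      (forall i, level m (s i)) /\ (forall i, strict_subset (s i) (s i.+1)) /\
      set_eq A (fun x => exists i, s i x)
  end.
Definition finitely_many_levels : Prop :=
  exists n, forall A, ~ level n A.

Definition very_WSTS : Prop :=
  wqo (tle S) /\ strong_monotone /\
  compl_deterministic /\ compl_wqo /\ compl_monotone /\
  compl_strong_strict_monotone /\ finitely_many_levels.

End TSDefs.

Record Buchi (Q Sigma : Type) := mkBuchi {
  bdelta : Q -> Sigma -> Q -> Prop;
  binit  : Q;
  bfinal : Q -> Prop
}.
Arguments mkBuchi {Q Sigma}.

Definition buchi_accepts (Q Sigma : Type) (B : Buchi Q Sigma) (w : nat -> Sigma) :=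
  exists rho : nat -> Q, rho 0 = binit B /\
    (forall n, bdelta B (rho n) (w n) (rho n.+1)) /\
    (forall N, exists n, N <= n /\ bfinal B (rho n)).

(** * S_bot : bottom = None *)
Definition bot_trans (Sigma X : Type) (S : TS Sigma X) (a : Sigma) (x y : option X) :=
  match x, y with
  | Some x, Some y => trans S a x y
  | _, _ => False
  end.
Definition bot_le (Sigma X : Type) (S : TS Sigma X) (x y : option X) :=
  match x, y with
  | None, _ => True
  | Some x, Some y => tle S x y
  | Some _, None => False
  end.
Definition S_bot (Sigma X : Type) (S : TS Sigma X) : TS Sigma (option X) :=
  mkTS (bot_trans S) (bot_le S).

Definition product (Q Sigma Y : Type) (B : Buchi Q Sigma) (T : TS Sigma Y)
  : TS (Sigma * Q) (Q * Y) :=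
  mkTS (fun (ar : Sigma * Q) (px qy : Q * Y) =>
          bdelta B px.1 ar.1 ar.2 /\ qy.1 = ar.2 /\ trans T ar.1 px.2 qy.2)
       (fun px qy => px.1 = qy.1 /\ tle T px.2 qy.2).

(* Since ⊥ lies below every state of S_⊥, a product state covers (q_f, ⊥)
   exactly when its automaton component is q_f; and since ⊥ has no outgoing
   transitions, an infinite path of B × S_⊥ from (q_0, x_0) is the same as a
   run of B on a trace of S from x_0.  Repeated coverability of (q_f, ⊥) is
   therefore an infinite path visiting q_f infinitely often, and as Q is
   finite, visiting F infinitely often amounts to visiting some q_f ∈ F
   infinitely often. *)

From mathcomp Require Import all_boot.
From Stdlib Require Import Relations Classical ClassicalEpsilon.

Set Implicit Arguments.
Unset Strict Implicit.
Unset Printing Implicit Defensive.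

Definition inf_often (P : nat -> Prop) : Prop :=
  forall N, exists n, N <= n /\ P n.

Lemma inf_often_pigeonhole (Q : finType) (F : Q -> Prop) (rho : nat -> Q) :
  inf_often (fun n => F (rho n)) ->
  exists q, F q /\ inf_often (fun n => rho n = q).
Proof.
move=> hF; apply: NNPP => hnone.
have /fin_all_exists [N hN] :
    forall q, exists Nq, forall n, Nq <= n -> F q -> rho n <> q.
  move=> q; apply: NNPP => hq; apply: hnone; exists q; split.
    by apply: NNPP => nFq; apply: hq; exists 0 => n _ /nFq.
  move=> M; apply: NNPP => hM; apply: hq; exists M => n Mn _ rhon.
  by apply: hM; exists n.
have [n [maxn Fn]] := hF (\max_q N q).
exact: hN (rho n) n (leq_trans (leq_bigmax (rho n)) maxn) Fn erefl.
Qed.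

Lemma inf_often_increasing (P : nat -> Prop) :
  inf_often P -> exists m : nat -> nat, (forall i, m i < m i.+1) /\ forall i, P (m i).
Proof.
move=> /choice [g hg].
exists (fun i => iter i (fun n => g n.+1) (g 0)); split=> [i|[|i]] /=.
- exact: (hg _).1.
- exact: (hg 0).2.
- exact: (hg _).2.
Qed.

Section InfinitePaths.
Variables (Sigma X : Type) (T : TS Sigma X).

Definition infinite_path (s : nat -> X) : Prop := forall n, step T (s n) (s n.+1).

Lemma infinite_path_reach_star s i j :
  infinite_path s -> i <= j -> reach_star T (s i) (s j).
Proof.
move=> hs /subnKC <-; elim: (j - i) => [|d IH]; first by rewrite addn0; apply: rt_refl.
by rewrite addnS; apply: rt_trans IH (rt_step _ _ _ _ (hs _)).
Qed.

Lemma infinite_path_reach_plus s i j :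
  infinite_path s -> i < j -> reach_plus T (s i) (s j).
Proof.
case: j => // j hs; rewrite ltnS => ij.
exact: clos_rt_t (infinite_path_reach_star hs ij) (t_step _ _ _ _ (hs j)).
Qed.

Lemma rep_coverable_of_path s y :
  infinite_path s -> inf_often (fun n => tle T y (s n)) -> rep_coverable T (s 0) y.
Proof.
move=> hs /inf_often_increasing [m [mS hm]].
exists (s \o m); split; [|split] => [|i|i] /=.
- exact: infinite_path_reach_star.
- exact: infinite_path_reach_plus.
- exact: hm.
Qed.

Lemma reach_plus_finite_path a b :
  reach_plus T a b ->
  exists k (f : nat -> X),
    [/\ f 0 = a, f k.+1 = b & forall j, j <= k -> step T (f j) (f j.+1)].
Proof.
move=> /(clos_trans_t1n X) hab.
elim: hab => [{}a {}b hab | {}a c {}b hac _ [k [f [f0 fk hf]]]].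
  by exists 0, (fun j => if j is 0 then a else b); split=> // [[]].
exists k.+1, (fun j => if j is j'.+1 then f j' else a).
by split=> // [[|j]] /=; [rewrite f0 | rewrite ltnS; apply: hf].
Qed.

(* Segment [i] is [F i 0 = z i, ..., F i (K i).+1 = z i.+1]; the position
   [(i, j)] walks through segment [i] and then jumps to [(i.+1, 0)]. *)
Lemma concat_finite_paths (z : nat -> X) (K : nat -> nat) (F : nat -> nat -> X) :
  (forall i, F i 0 = z i) -> (forall i, F i (K i).+1 = z i.+1) ->
  (forall i j, j <= K i -> step T (F i j) (F i j.+1)) ->
  exists s, [/\ s 0 = z 0, infinite_path s & forall i, exists n, i <= n /\ s n = z i].
Proof.
move=> F0 FK hF.
pose next (p : nat * nat) := if p.2 < K p.1 then (p.1, p.2.+1) else (p.1.+1, 0).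
pose pos n := iter n next (0, 0).
have pos_le n : (pos n).2 <= K (pos n).1.
  by elim: n => //= n; rewrite /next; case: (pos n) => i j /=; case: ltnP.
have pos_segment n i j : pos n = (i, 0) -> j <= K i -> pos (j + n) = (i, j).
  move=> hn; elim: j => // j IH lt.
  by rewrite addSn /= IH ?(ltnW lt) // /next /= lt.
have pos_start i : exists n, i <= n /\ pos n = (i, 0).
  elim: i => [|i [n [le_in hn]]]; first by exists 0.
  exists ((K i).+1 + n); split; first by rewrite addSn ltnS (leq_trans le_in) ?leq_addl.
  by rewrite addSn /= (pos_segment _ _ _ hn (leqnn _)) /next /= ltnn.
exists (fun n => F (pos n).1 (pos n).2); split=> [|n|i] /=.
- exact: F0.
- move: (pos_le n); rewrite /next; case: (pos n) => i j /= le_j.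
  case: ltnP => [lt_j | ge_j]; first exact: hF.
  have -> : j = K i by apply/eqP; rewrite eqn_leq le_j.
  by rewrite F0 -FK; apply: hF.
- by have [n [le_in hn]] := pos_start i; exists n; rewrite hn F0.
Qed.

Lemma path_of_rep_coverable x y :
  rep_coverable T x y ->
  exists s, [/\ s 0 = x, infinite_path s & inf_often (fun n => tle T y (s n))].
Proof.
move=> [z [hz0 [hz hy]]].
pose z' i := if i is 0 then x else z i.
have hz' i : reach_plus T (z' i) (z' i.+1).
  by case: i => [|i]; [apply: clos_rt_t hz0 (hz 0) | apply: hz].
have /choice [K /choice [F hKF]] := fun i => reach_plus_finite_path (hz' i).
have [s [s0 hs hsz]] :
    exists s, [/\ s 0 = z' 0, infinite_path s & forall i, exists n, i <= n /\ s n = z' i].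
  by apply: (@concat_finite_paths z' K F) => i; case: (hKF i).
exists s; split=> // N; have [n [le_Nn hn]] := hsz N.+1.
by exists n; split; [apply: ltnW | rewrite hn; apply: hy].
Qed.

Lemma rep_coverableP x y :
  rep_coverable T x y <->
  exists s, [/\ s 0 = x, infinite_path s & inf_often (fun n => tle T y (s n))].
Proof.
split; first exact: path_of_rep_coverable.
by move=> [s [<- hs hy]]; apply: rep_coverable_of_path.
Qed.

End InfinitePaths.

Section BottomProduct.
Variables (Q Sigma X : Type) (B : Buchi Q Sigma) (S : TS Sigma X).

Lemma product_bot_run_path (w : nat -> Sigma) (rho : nat -> Q) (xs : nat -> X) :
  (forall n, bdelta B (rho n) (w n) (rho n.+1)) ->
  (forall n, trans S (w n) (xs n) (xs n.+1)) ->
  infinite_path (product B (S_bot S)) (fun n => (rho n, Some (xs n))).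
Proof.
by move=> hB hS n; exists (w n, rho n.+1); split; [apply: hB | split; last apply: hS].
Qed.

Lemma product_bot_path_run (s : nat -> Q * option X) q x :
  s 0 = (q, Some x) -> infinite_path (product B (S_bot S)) s ->
  exists w, traces_omega S x w /\ forall n, bdelta B (s n).1 (w n) (s n.+1).1.
Proof.
move=> s0 /choice [l hl]; exists (fun n => (l n).1); split=> [|n].
- exists (fun n => odflt x (s n).2); split=> [|n]; first by rewrite s0.
  by have [_ [_]] := hl n; case: (s n).2; case: (s n.+1).2.
- by have [hB [-> _]] := hl n.
Qed.

End BottomProduct.

Theorem proposition19 (Q Sigma : finType) (X : Type)
  (B : Buchi Q Sigma) (S : TS Sigma X) (x0 : X) :
  very_WSTS S ->
  ((exists w : nat -> Sigma, buchi_accepts B w /\ traces_omega S x0 w) <->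
   (exists qf : Q, bfinal B qf /\
      rep_coverable (product B (S_bot S)) (binit B, Some x0) (qf, None))).
Proof.
move=> _; split.
- move=> [w [[rho [rho0 [hB hF]]] [xs [xs0 hS]]]].
  have [qf [Fqf hqf]] := inf_often_pigeonhole hF.
  exists qf; split=> //; apply/rep_coverableP.
  exists (fun n => (rho n, Some (xs n))); split=> [||N].
  + by rewrite rho0 xs0.
  + exact: product_bot_run_path hB hS.
  + by have [n [le_Nn <-]] := hqf N; exists n.
- move=> [qf [Fqf /rep_coverableP [s [s0 hs hqf]]]].
  have [w [hS hB]] := product_bot_path_run s0 hs.
  exists w; split=> //; exists (fun n => (s n).1); split; first by rewrite s0.
  split=> // N; have [n [le_Nn [qf_sn _]]] := hqf N.
  by exists n; rewrite -qf_sn.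
Qed.
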